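(* Let $\langle \underline{S}, \mathcal{G}, l, u\rangle$ be a granular operator space (as defined in the context). Define the relation $\approx$ on $\wp(\underline{S})$ by $A \approx B$ if and only if $A^l = B^l$ and $A^u = B^u$, and on the quotient $\wp(\underline{S})|\approx$ define $\alpha \Subset \beta$ if and only if $\alpha^l \subseteq \beta^l$ and $\alpha^u \subseteq \beta^u$, where for an equivalence class $\alpha$, $\alpha^l$ and $\alpha^u$ denote the (common) lower and upper approximations of its members. Then $\Subset$ is a bounded partial order on $\wp(\underline{S})|\approx$, with least element the class of $\emptyset$ (whose approximations are $(\emptyset,\emptyset)$) and greatest element the class of $\underline{S}$ (whose approximations are $(\underline{S}^l, \underline{S}^u)$).
   Context: A granular operator space is a structure $\langle \underline{S}, \mathcal{G}, l, u\rangle$ where $\underline{S}$ is a set, $l, u : \wp(\underline{S}) \to \wp(\underline{S})$ are maps (written $a \mapsto a^l$, $a \mapsto a^u$), and $\mathcal{G} \subseteq \wp(\underline{S})$, such that for all $a, b \subseteq \underline{S}$: $a^l \subseteq a$, $a^{ll} = a^l$, $a^u \subseteq a^{uu}$; if $a \subseteq b$ then $a^l \subseteq b^l$ and $a^u \subseteq b^u$; $\emptyset^l = \emptyset$, $\emptyset^u = \emptyset$, $\underline{S}^l \subseteq \underline{S}$, $\underline{S}^u \subseteq \underline{S}$. Moreover $\mathcal{G}$ is an admissible granulation, i.e. (WRA) for every $a \subseteq \underline{S}$ there exist $b_1,\dots,b_r \in \mathcal{G}$ and a term $t$ built from $\cup, \cap$, complementation, $\underline{S}$ and $\emptyset$ with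 $t(b_1,\dots,b_r) = a^l$, and likewise there exist $b'_1,\dots,b'_s\in\mathcal{G}$ and such a term $t'$ with $t'(b'_1,\dots,b'_s) = a^u$; (LS) for every $b \in \mathcal{G}$ and every $a \subseteq \underline{S}$, if $b \subseteq a$ then $b \subseteq a^l$; (FU) for all $a, b \in \mathcal{G}$ there exists $z \subseteq \underline{S}$ with $a \subset z$, $b \subset z$ and $z^l = z^u = z$. *)

From mathcomp Require Import all_boot.
From mathcomp Require Import boolp classical_sets.
Set Implicit Arguments. Unset Strict Implicit. Unset Printing Implicit Defensive.
Local Open Scope classical_set_scope.

Inductive sterm : Type :=
| TVar of nat
| TUnion of sterm & sterm
| TInter of sterm & sterm
| TCompl of sterm
| TTop
| TBot.

Fixpoint seval (T : Type) (bs : seq (set T)) (t : sterm) : set T :=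
  match t with
  | TVar n => nth set0 bs n
  | TUnion t1 t2 => seval bs t1 `|` seval bs t2
  | TInter t1 t2 => seval bs t1 `&` seval bs t2
  | TCompl t1 => ~` seval bs t1
  | TTop => setT
  | TBot => set0
  end.

(* A granular operator space on the universe [setT : set T]. *)
Record GOS (T : Type) := {
  gran : set (set T);
  lo : set T -> set T;
  up : set T -> set T;
  lo_sub : forall a, lo a `<=` a;
  lo_idem : forall a, lo (lo a) = lo a;
  up_sub_upup : forall a, up a `<=` up (up a);
  lo_mono : forall a b, a `<=` b -> lo a `<=` lo b;
  up_mono : forall a b, a `<=` b -> up a `<=` up b;
  lo0 : lo set0 = set0;
  up0 : up set0 = set0;
  loT : lo setT `<=` setT;
  upT : up setT `<=` setT;
  WRA_lo : forall a, exists bs : seq (set T),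
      (forall b, b \in bs -> gran b) /\ exists t, seval bs t = lo a;
  WRA_up : forall a, exists bs : seq (set T),
      (forall b, b \in bs -> gran b) /\ exists t, seval bs t = up a;
  LS : forall b a, gran b -> b `<=` a -> b `<=` lo a;
  FU : forall a b, gran a -> gran b ->
      exists z, a `<` z /\ b `<` z /\ lo z = z /\ up z = z
}.

Section Quot.
Variables (T : Type) (O : GOS T).

Definition approx_eq (A B : set T) := lo O A = lo O B /\ up O A = up O B.

Definition aclass (A : set T) : set (set T) := [set B | approx_eq A B].

Definition gquot := {C : set (set T) | exists A, C = aclass A}.

Definition qclass (A : set T) : gquot := exist _ (aclass A) (ex_intro _ A erefl).

(* common lower / upper approximation of the members of a class *)
Definition qlo (al : gquot) : set T := \bigcup_(A in proj1_sig al) lo O A.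
Definition qup (al : gquot) : set T := \bigcup_(A in proj1_sig al) up O A.

Definition qsub (al be : gquot) := qlo al `<=` qlo be /\ qup al `<=` qup be.
End Quot.

From mathcomp Require Import all_boot.
From mathcomp Require Import boolp classical_sets.
Local Open Scope classical_set_scope.

(* Every class is the class of some set, and a class is determined by its
   pair of approximations; so [qsub] is the componentwise inclusion of
   approximation pairs, which is a partial order, and monotonicity of [lo]
   and [up] together with [lo set0 = up set0 = set0] make the classes of
   [set0] and [setT] its bounds. *)

Section GranularQuotient.
Variables (T : Type) (O : GOS T).

Lemma qlo_qclass A : qlo (qclass O A) = lo O A.
Proof.
apply/seteqP; split; first by move=> x [B [-> _]].
by move=> x lAx; exists A.
Qed.

Lemma qup_qclass A : qup (qclass O A) = up O A.
Proof.
apply/seteqP; split; first by move=> x [B [_ ->]].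
by move=> x uAx; exists A.
Qed.

Lemma gquot_qclass (al : gquot O) : exists A, al = qclass O A.
Proof. by case: al => C [A eC]; exists A; apply: eq_exist. Qed.

Lemma qclass_approx_eq A B : approx_eq O A B -> qclass O A = qclass O B.
Proof.
by move=> [elo eup]; apply: eq_exist; rewrite /aclass /approx_eq elo eup.
Qed.

Lemma gquot_ext (al be : gquot O) :
  qlo al = qlo be -> qup al = qup be -> al = be.
Proof.
have [A ->] := gquot_qclass al; have [B ->] := gquot_qclass be.
by rewrite !qlo_qclass !qup_qclass => elo eup; apply: qclass_approx_eq.
Qed.

Lemma qsub_refl (al : gquot O) : qsub al al.
Proof. by split. Qed.

Lemma qsub_trans (al be ga : gquot O) : qsub al be -> qsub be ga -> qsub al ga.
Proof.
by move=> [ab_lo ab_up] [bg_lo bg_up]; split; apply: subset_trans; eauto.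
Qed.

Lemma qsub_anti (al be : gquot O) : qsub al be -> qsub be al -> al = be.
Proof.
by move=> [ab_lo ab_up] [ba_lo ba_up]; apply: gquot_ext; rewrite eqEsubset.
Qed.

Lemma qlo_qclass0 : qlo (qclass O set0) = set0.
Proof. by rewrite qlo_qclass lo0. Qed.

Lemma qup_qclass0 : qup (qclass O set0) = set0.
Proof. by rewrite qup_qclass up0. Qed.

Lemma qclass0_qsub (al : gquot O) : qsub (qclass O set0) al.
Proof. by rewrite /qsub qlo_qclass0 qup_qclass0; split; apply: sub0set. Qed.

Lemma qsub_qclassT (al : gquot O) : qsub al (qclass O setT).
Proof.
have [A ->] := gquot_qclass al.
rewrite /qsub !qlo_qclass !qup_qclass.
by split; [apply: lo_mono | apply: up_mono].
Qed.

End GranularQuotient.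

Theorem mainTheorem1 (T : Type) (O : GOS T) :
  (forall al : gquot O, qsub al al) /\
  (forall al be : gquot O, qsub al be -> qsub be al -> al = be) /\
  (forall al be ga : gquot O, qsub al be -> qsub be ga -> qsub al ga) /\
  (forall al : gquot O, qsub (qclass O set0) al) /\
  (forall al : gquot O, qsub al (qclass O setT)) /\
  (qlo (qclass O set0) = set0 /\ qup (qclass O set0) = set0) /\
  (qlo (qclass O setT) = lo O setT /\ qup (qclass O setT) = up O setT).
Proof.
split; first exact: qsub_refl.
split; first exact: qsub_anti.
split; first exact: qsub_trans.
split; first exact: qclass0_qsub.
split; first exact: qsub_qclassT.
split; first by split; [exact: qlo_qclass0 | exact: qup_qclass0].
by split; [exact: qlo_qclass | exact: qup_qclass].
Qed.
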